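(* Let $\mathcal V$ be a variety of $\tau$-algebras axiomatised by the equational theory $T$, and let $\mathbf{Cl}(\mathcal V)$ be the clone $\mathcal V$-algebra. Then: (1) $\mathbf{Cl}(\mathcal V)$ is a finite dimensional clone $\tau$-algebra; (2) the congruence lattice $\mathrm{Con}\,\mathbf{Cl}(\mathcal V)$ is isomorphic to the lattice $L(T)$ of all equational theories (of type $\tau$) containing $T$; (3) if $w\in F_{\mathcal V}$ has dimension $n>0$ in $\mathbf{Cl}(\mathcal V)$, then there is a $\tau$-term $t$ whose variables are among $v_1,\dots,v_n$ with $t\in w$; (4) if $w\in F_{\mathcal V}$ has dimension $0$ in $\mathbf{Cl}(\mathcal V)$, then there is a $\tau$-term $t(v_1)$ (with variables among $v_1$) with $t(v_1)\in w$ and $\mathcal V\models t(v_1)=t(v_2)$; (5) $\mathbf{Cl}(\mathcal V)$ is isomorphic to the block algebra $(\mathrm{Clo}\,\mathbf F_{\mathcal V})^\top$.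
   Context: $\mathbf F_{\mathcal V}$ is the free algebra of $\mathcal V$ over the countable set $I=\{v_1,v_2,\dots\}$ of generators; its elements are equivalence classes of $\tau$-terms in the variables $v_i$ modulo $\mathcal V$-equality. The clone $\mathcal V$-algebra is $\mathbf{Cl}(\mathcal V)=(\mathbf F_{\mathcal V},q_n^{\mathbf F}\ (n\ge0),\mathsf e_i^{\mathbf F}\ (i\ge1))$ with $\mathsf e_i^{\mathbf F}=v_i$ and $q_n^{\mathbf F}(a,b_1,\dots,b_n)=s(a)$, where $s$ is the unique endomorphism of $\mathbf F_{\mathcal V}$ with $s(v_i)=b_i$ ($i\le n$) and $s(v_i)=v_i$ ($i>n$). A clone $\tau$-algebra is an algebra $(C,\sigma\ (\sigma\in\tau),q_n,\mathsf e_i)$, $\mathsf e_i$ nullary and $q_n$ of arity $n+1$, satisfying: (C1) $q_n(\mathsf e_i,x_1,\dots,x_n)=x_i$ ($i\le n$); (C2) $q_n(\mathsf e_j,x_1,\dots,x_n)=\mathsf e_j$ ($j>n$); (C3) $q_n(x,\mathsf e_1,\dots,\mathsf e_n)=x$; (C4) $q_k(x,y_1,\dots,y_k)=q_n(x,y_1,\dots,y_k,\mathsf e_{k+1},\dots,\mathsf e_n)$ ($n>k$); (C5) $q_n(q_n(x,\mathbf y),\mathbf z)=q_n(x,q_n(y_1,\mathbf z),\dots,q_n(y_n,\mathbf z))$; (C6) $q_n(\sigma(x_1,\dots,x_k),\mathbf y)=\sigma(q_n(x_1,\mathbf y),\dots,q_n(x_k,\mathbf y))$. An element $a$ is independent of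 $\mathsf e_n$ if $q_n(a,\mathsf e_1,\dots,\mathsf e_{n-1},\mathsf e_{n+1})=a$; its dimension is $0$ if it depends on no $\mathsf e_n$, otherwise the largest $n$ it depends on (infinite if infinitely many); finite dimensional means all elements have finite dimension. $\mathrm{Clo}\,\mathbf F_{\mathcal V}$ is the clone of term operations of $\mathbf F_{\mathcal V}$ (all operations $\mathbf a\mapsto t(\mathbf a)$ for $\tau$-terms $t$ in at most $k$ variables, on $F^k$, together with their restrictions obtained by dropping fictitious last arguments, including nullary ones). With $\omega=\{1,2,\dots\}$, the top extension of $f:A^n\to A$ is $f^\top(s)=f(s_1,\dots,s_n)$ for $s\in A^\omega$; $(\mathrm{Clo}\,\mathbf F_{\mathcal V})^\top=\{f^\top: f\in\mathrm{Clo}\,\mathbf F_{\mathcal V}\}$ viewed as a subalgebra of the full functional clone $\tau$-algebra with value domain $\mathbf F_{\mathcal V}$, whose universe is all maps $F_{\mathcal V}^\omega\to F_{\mathcal V}$, with $\mathsf e_i(s)=s_i$, $q_n(\varphi,\psi_1,\dots,\psi_n)(s)=\varphi(s[\psi_1(s),\dots,\psi_n(s)])$ ($s[b_1,\dots,b_n]$ replacing the first $n$ entries), $\sigma(\psi_1,\dots,\psi_k)(s)=\sigma^{\mathbf F}(\psi_1(s),\dots,\psi_k(s))$. *)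

(* INDEXING CONVENTION: everything is 0-based.  The paper's variable v_i
   (i >= 1) is [Var (i-1)], the paper's constant e_i is [e (i-1)], the
   argument y_i of q_n is [y (i-1)] with [y : 'I_n -> C], and the paper's
   omega = {1,2,...} is [nat] (s_i is [s (i-1)]). *)
From Stdlib Require Import ClassicalEpsilon.
From mathcomp Require Import all_boot.

Inductive term (Op : Type) (ar : Op -> nat) : Type :=
| Var : nat -> term Op ar
| App : forall o : Op, ('I_(ar o) -> term Op ar) -> term Op ar.
Arguments Var {Op ar}.
Arguments App {Op ar}.





(* s[b_1,...,b_n]: replace the first n entries of d by b. *)
Definition pad {C : Type} {n : nat} (b : 'I_n -> C) (d : nat -> C) (j : nat) : C :=
  match (insub j : option 'I_n) with Some i => b i | None => d j end.

Section Syntax.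
Context {Op : Type} {ar : Op -> nat}.
Local Notation term := (term Op ar).

Fixpoint vars_lt (n : nat) (t : term) : Prop :=
  match t with
  | Var i => i < n
  | App o ts => forall i, vars_lt n (ts i)
  end.

Fixpoint subst (sb : nat -> term) (t : term) : term :=
  match t with
  | Var i => sb i
  | App o ts => App o (fun i => subst sb (ts i))
  end.

Fixpoint eval {A : Type} (I : forall o : Op, ('I_(ar o) -> A) -> A)
    (v : nat -> A) (t : term) : A :=
  match t with
  | Var i => v i
  | App o ts => I o (fun i => eval I v (ts i))
  end.

Definition is_eq_theory (E : term -> term -> Prop) : Prop :=
  [/\ (forall t, E t t),
      (forall s t, E s t -> E t s),
      (forall s t u, E s t -> E t u -> E s u),
      (forall o (ss ts : 'I_(ar o) -> term),
          (forall i, E (ss i) (ts i)) -> E (App o ss) (App o ts)) &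
      (forall sb s t, E s t -> E (subst sb s) (subst sb t))].

Definition models {A : Type} (I : forall o : Op, ('I_(ar o) -> A) -> A)
    (E : term -> term -> Prop) : Prop :=
  forall s t, E s t -> forall v, eval I v s = eval I v t.

Definition eqV (E : term -> term -> Prop) (s t : term) : Prop :=
  forall (A : Type) (I : forall o : Op, ('I_(ar o) -> A) -> A),
    models I E -> forall v, eval I v s = eval I v t.

Definition incl_rel {X : Type} (R S : X -> X -> Prop) : Prop :=
  forall x y, R x y -> S x y.

End Syntax.

Section FreeAlgebra.
Context {Op : Type} {ar : Op -> nat}.
Local Notation term := (term Op ar).
Variable T : term -> term -> Prop.

(* F_V: classes of terms modulo V-equality *)
Definition Fr : Type := {P : term -> Prop | exists t, P = eqV T t}.

Definition cls (t : term) : Fr := exist _ (eqV T t) (ex_intro _ t erefl).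

Definition rep (w : Fr) : term :=
  proj1_sig (constructive_indefinite_description _ (proj2_sig w)).

Definition Cl_op (o : Op) (ws : 'I_(ar o) -> Fr) : Fr :=
  cls (App o (fun i => rep (ws i))).

(* q_n^F(a, b_1..b_n) = s(a), s the endomorphism with v_i |-> b_i (i <= n),
   v_i |-> v_i (i > n); computed on representatives by substitution. *)
Definition Cl_q (n : nat) (a : Fr) (bs : 'I_n -> Fr) : Fr :=
  cls (subst (pad (fun i => rep (bs i)) Var) (rep a)).

Definition Cl_e (i : nat) : Fr := cls (Var i).

End FreeAlgebra.
Arguments Fr {Op ar} T.
Arguments cls {Op ar} T t.
Arguments rep {Op ar} T w.
Arguments Cl_op {Op ar} T o ws.
Arguments Cl_q {Op ar} T n a bs.
Arguments Cl_e {Op ar} T i.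

Section CloneAlgebra.
Context {Op : Type} {ar : Op -> nat} {C : Type}.
Variables (sg : forall {o : Op}, ('I_(ar o) -> C) -> C)
          (q : forall {n : nat}, C -> ('I_n -> C) -> C)
          (e : nat -> C).

Definition is_clone_algebra : Prop :=
  (forall n (x : 'I_n -> C) (i : 'I_n), q (e i) x = x i) /\
      (forall n (x : 'I_n -> C) j, n <= j -> q (e j) x = e j) /\
      (forall n (x : C), q x (fun i : 'I_n => e i) = x) /\
      (forall k n (x : C) (y : 'I_k -> C), k < n ->
                  q x y = q x (fun i : 'I_n => pad y e i)) /\
      (forall n (x : C) (y z : 'I_n -> C),
                  q (q x y) z = q x (fun i => q (y i) z)) /\
      (forall n o (xs : 'I_(ar o) -> C) (y : 'I_n -> C),
                  q (sg xs) y = sg (fun i => q (xs i) y)).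

(* a is independent of e_{k+1} (0-based index k):
   q_{k+1}(a, e_1, ..., e_k, e_{k+2}) = a *)
Definition independent (a : C) (k : nat) : Prop :=
  q a (fun i : 'I_k.+1 => if (i : nat) < k then e i else e k.+1) = a.

(* a has (finite) dimension d: d = 0 if a depends on no e_n, otherwise d is
   the largest n such that a depends on e_n. *)
Definition has_dim (a : C) (d : nat) : Prop :=
  (d = 0 /\ forall k, independent a k) \/
  (0 < d /\ ~ independent a d.-1 /\ forall k, d <= k -> independent a k).

Definition finite_dimensional : Prop := forall a : C, exists d, has_dim a d.

Definition is_congruence (R : C -> C -> Prop) : Prop :=
  [/\ (forall x, R x x), (forall x y, R x y -> R y x),
      (forall x y z, R x y -> R y z -> R x z),
      (forall o (xs ys : 'I_(ar o) -> C),
          (forall i, R (xs i) (ys i)) -> R (sg xs) (sg ys)) &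
      (forall n (x y : C) (bs cs : 'I_n -> C),
          R x y -> (forall i, R (bs i) (cs i)) -> R (q x bs) (q y cs))].

End CloneAlgebra.

Section Functional.
Context {Op : Type} {ar : Op -> nat} {A : Type}.
Variable opA : forall {o : Op}, ('I_(ar o) -> A) -> A.

Definition ff_e (i : nat) : (nat -> A) -> A := fun s => s i.
Definition ff_q (n : nat) (phi : (nat -> A) -> A) (psi : 'I_n -> (nat -> A) -> A)
  : (nat -> A) -> A := fun s => phi (pad (fun i => psi i s) s).
Definition ff_op (o : Op) (psi : 'I_(ar o) -> (nat -> A) -> A) : (nat -> A) -> A :=
  fun s => opA (fun i => psi i s).

(* Clo A: an n-ary operation f is in the clone of term operations iff it is
   the term operation a |-> t(a) on A^k of a term t in at most k >= n
   variables, restricted to its first n arguments, the last k-n arguments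
   being fictitious (n = k gives the term operations themselves). *)
Definition in_Clo (n : nat) (f : ('I_n -> A) -> A) : Prop :=
  exists k (t : term Op ar), [/\ n <= k, vars_lt k t &
    forall (b : 'I_k -> A) (d : nat -> A),
      eval (@opA) (pad b d) t = f (fun i : 'I_n => pad b d i)].

Definition top (n : nat) (f : ('I_n -> A) -> A) : (nat -> A) -> A :=
  fun s => f (fun i : 'I_n => s i).

Definition in_block (phi : (nat -> A) -> A) : Prop :=
  exists n (f : ('I_n -> A) -> A), in_Clo n f /\ phi = top n f.

End Functional.

(* Every element of F_V is the class of a term, and q_n acts on classes by
   substitution, so the clone axioms are the laws of simultaneous
   substitution. An element w is independent of e_k exactly when renaming
   v_k to v_(k+1) fixes a representative up to V-equality; then v_k may be
   replaced by any term, in particular by v_1. Collapsing all variables beyond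
   the dimension onto v_1 therefore yields a representative in the first n
   variables, and since a term has finitely many variables every element has
   finite dimension. A congruence R of Cl(V) corresponds to the theory
   {s = t | R [s] [t]}; conversely every equational theory containing T
   contains V-equality (the term algebra modulo it is a model of T), so it is
   determined by the induced relation on classes. Finally, sending w to the
   function s |-> w(s) evaluated in F_V is a homomorphism onto the top
   extensions of the term operations, injective because w(v_1, v_2, ...) = w. *)

From Pilot Require Import Defs.
From mathcomp Require Import all_boot.
From Stdlib Require Import FunctionalExtensionality PropExtensionality.
From Stdlib Require Import ProofIrrelevance ClassicalEpsilon Classical.

Set Implicit Arguments.

Section Substitution.
Variables (Op : Type) (ar : Op -> nat).
Local Notation term := (term Op ar).

Lemma subst_comp (s1 s2 : nat -> term) (t : term) :
  subst s2 (subst s1 t) = subst (fun i => subst s2 (s1 i)) t.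
Proof.
elim: t => [n|o ts IH] //=; congr (App o); apply: functional_extensionality => i.
exact: IH.
Qed.

Lemma subst_Var (t : term) : subst Var t = t.
Proof.
elim: t => [n|o ts IH] //=; congr (App o); apply: functional_extensionality => i.
exact: IH.
Qed.

Lemma eq_subst_vars_lt [m] (s1 s2 : nat -> term) [t : term] : vars_lt m t ->
  (forall i, i < m -> s1 i = s2 i) -> subst s1 t = subst s2 t.
Proof.
elim: t => [n|o ts IH] /= t_m s12; first exact: s12.
by congr (App o); apply: functional_extensionality => i; apply: IH.
Qed.

Lemma eq_eval_vars_lt A (I : forall o : Op, ('I_(ar o) -> A) -> A) [m]
    (v1 v2 : nat -> A) [t : term] :
  vars_lt m t -> (forall i, i < m -> v1 i = v2 i) -> eval I v1 t = eval I v2 t.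
Proof.
elim: t => [n|o ts IH] /= t_m v12; first exact: v12.
by congr (I o); apply: functional_extensionality => i; apply: IH.
Qed.

Lemma eval_subst A (I : forall o : Op, ('I_(ar o) -> A) -> A) v sb (t : term) :
  eval I v (subst sb t) = eval I (fun j => eval I v (sb j)) t.
Proof.
elim: t => [n|o ts IH] //=; congr (I o); apply: functional_extensionality => i.
exact: IH.
Qed.

Lemma vars_lt_leq [m m'] [t : term] : m <= m' -> vars_lt m t -> vars_lt m' t.
Proof.
move=> le_mm'; elim: t => [n|o ts IH] /=; last by move=> t_m i; apply: IH.
by move=> lt_nm; apply: leq_trans le_mm'.
Qed.

Lemma vars_lt_subst m sb (t : term) :
  (forall i, vars_lt m (sb i)) -> vars_lt m (subst sb t).
Proof. by move=> sb_m; elim: t => [n|o ts IH] //=. Qed.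

Fixpoint var_bound (t : term) : nat :=
  match t with
  | Var i => i.+1
  | App o ts => \max_(i < ar o) var_bound (ts i)
  end.

Lemma vars_lt_bound (t : term) : vars_lt (var_bound t) t.
Proof.
elim: t => [n|o ts IH] //= i; apply: vars_lt_leq (IH i).
exact: (@leq_bigmax_cond _ _ (fun i => var_bound (ts i)) i).
Qed.

End Substitution.

Section Pad.
Variables (C : Type) (n : nat) (b : 'I_n -> C) (d : nat -> C).

Lemma pad_ord (i : 'I_n) : pad b d i = b i.
Proof. by rewrite /pad valK. Qed.

Lemma pad_lt [j] (lt_jn : j < n) : pad b d j = b (Ordinal lt_jn).
Proof. by rewrite /pad insubT. Qed.

Lemma pad_ge j : n <= j -> pad b d j = d j.
Proof. by move=> le_nj; rewrite /pad insubF // ltnNge le_nj. Qed.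

End Pad.

Lemma pad_restrict C n (s : nat -> C) : pad (fun i : 'I_n => s i) s = s.
Proof.
by apply: functional_extensionality => j; rewrite /pad; case: insubP => [i _ <-|].
Qed.

Section Quotient.
Variables (X : Type) (E : X -> X -> Prop).

(* The same encoding as [Fr]: [Fr T] is convertible to [quot (eqV T)]. *)
Definition quot : Type := {P : X -> Prop | exists x, P = E x}.
Definition qclass (x : X) : quot := exist _ (E x) (ex_intro _ x erefl).
Definition qrep (w : quot) : X :=
  proj1_sig (constructive_indefinite_description _ (proj2_sig w)).

Lemma qrepK w : qclass (qrep w) = w.
Proof.
rewrite /qrep; case: constructive_indefinite_description => x /=.
case: w => P P_cls /= P_x; rewrite /qclass; move: (ex_intro _ x _) P_cls.
by rewrite -P_x => p1 p2; congr exist; apply: proof_irrelevance.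
Qed.

Hypotheses (E_refl : forall x, E x x) (E_sym : forall x y, E x y -> E y x)
  (E_trans : forall x y z, E x y -> E y z -> E x z).

Lemma qclass_eq s t : qclass s = qclass t <-> E s t.
Proof.
split=> [/(f_equal (@proj1_sig _ _)) /= -> | E_st]; first exact: E_refl.
have E_s_t : E s = E t.
  apply: functional_extensionality => u; apply: propositional_extensionality.
  split=> [E_su | E_tu]; first exact: E_trans (E_sym E_st) E_su.
  exact: E_trans E_st E_tu.
rewrite /qclass; move: (ex_intro _ s _) (ex_intro _ t _); rewrite E_s_t => p1 p2.
by congr exist; apply: proof_irrelevance.
Qed.

Lemma qrep_class t : E (qrep (qclass t)) t.
Proof. by apply/qclass_eq; rewrite qrepK. Qed.

End Quotient.

Section EquationalTheory.
Variables (Op : Type) (ar : Op -> nat) (E : term Op ar -> term Op ar -> Prop).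
Local Notation term := (term Op ar).
Hypothesis E_theory : is_eq_theory E.

Lemma theory_refl t : E t t.
Proof. by case: E_theory. Qed.

Lemma theory_sym [s t] : E s t -> E t s.
Proof. by case: E_theory => _ E_sym _ _ _; apply: E_sym. Qed.

Lemma theory_trans [s t u] : E s t -> E t u -> E s u.
Proof. by case: E_theory => _ _ E_trans _ _; apply: E_trans. Qed.

Lemma theory_App [o] [ss ts : 'I_(ar o) -> term] :
  (forall i, E (ss i) (ts i)) -> E (App o ss) (App o ts).
Proof. by case: E_theory => _ _ _ E_App _; apply: E_App. Qed.

Lemma theory_subst sb [s t] : E s t -> E (subst sb s) (subst sb t).
Proof. by case: E_theory => _ _ _ _ E_subst; apply: E_subst. Qed.

Lemma theory_subst_pointwise [s1 s2 : nat -> term] t :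
  (forall i, E (s1 i) (s2 i)) -> E (subst s1 t) (subst s2 t).
Proof.
by move=> E_s12; elim: t => [n|o ts IH] /=; [apply: E_s12 | apply: theory_App].
Qed.

Local Notation qclass := (qclass E).

Lemma qclass_theory_eq s t : qclass s = qclass t <-> E s t.
Proof. exact: qclass_eq theory_refl theory_sym theory_trans s t. Qed.

Lemma qrep_class_theory t : E (qrep (qclass t)) t.
Proof. exact: qrep_class theory_refl theory_sym theory_trans t. Qed.

Definition quot_op o (ws : 'I_(ar o) -> quot E) : quot E :=
  qclass (App o (fun i => qrep (ws i))).

Lemma eval_quot_op v t : eval quot_op v t = qclass (subst (fun j => qrep (v j)) t).
Proof.
elim: t => [n|o ts IH] /=; first by rewrite qrepK.
apply/qclass_theory_eq; apply: theory_App => i; rewrite IH.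
exact: qrep_class_theory.
Qed.

(* Completeness of equational logic: the term algebra modulo [E] is a model
   of [T], and there the generic valuation separates non-[E]-equal terms. *)
Lemma eqV_sub_theory T : incl_rel T E -> incl_rel (eqV T) E.
Proof.
move=> T_E s t eqV_st.
have models_T : models quot_op T.
  move=> s' t' /T_E E_st v; rewrite !eval_quot_op.
  exact/qclass_theory_eq/theory_subst.
have := eqV_st _ _ models_T (fun j => qclass (Var j)); rewrite !eval_quot_op.
move/qclass_theory_eq => E_st.
have E_Var j : E (qrep (qclass (Var j))) (Var j) by apply: qrep_class_theory.
rewrite -(subst_Var s) -(subst_Var t).
apply: theory_trans (theory_sym (theory_subst_pointwise s E_Var)) _.
exact: theory_trans E_st (theory_subst_pointwise t E_Var).
Qed.

End EquationalTheory.

Section Soundness.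
Variables (Op : Type) (ar : Op -> nat) (T : term Op ar -> term Op ar -> Prop).

Lemma eqV_theory : is_eq_theory (eqV T).
Proof.
split.
- by move=> t A I _ v.
- by move=> s t st A I I_T v; rewrite (st A I I_T v).
- by move=> s t u st tu A I I_T v; rewrite (st A I I_T v) (tu A I I_T v).
- move=> o ss ts sts A I I_T v /=; congr (I o).
  by apply: functional_extensionality => i; apply: sts.
- by move=> sb s t st A I I_T v; rewrite !eval_subst; apply: st.
Qed.

Lemma T_sub_eqV : incl_rel T (eqV T).
Proof. by move=> s t T_st A I I_T v; apply: I_T. Qed.

End Soundness.

Section Dimension.
Variables (C : Type) (q : forall n, C -> ('I_n -> C) -> C) (e : nat -> C).

Lemma has_dim_of_independent_ge (a : C) m :
  (forall k, m <= k -> independent q e a k) -> exists d, has_dim q e a d.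
Proof.
elim: m => [|m IHm] indep_a; first by exists 0; left; split=> // k; apply: indep_a.
have [indep_m|dep_m] := classic (independent q e a m); last by exists m.+1; right.
by apply: IHm => k; rewrite leq_eqVlt => /orP[/eqP <- //|]; apply: indep_a.
Qed.

End Dimension.

Section CloneAlgebraOfVariety.
Variables (Op : Type) (ar : Op -> nat) (T : term Op ar -> term Op ar -> Prop).
Local Notation term := (term Op ar).
Local Notation cls := (cls T).
Local Notation rep := (rep T).
Local Notation V := (eqV T).
Local Notation V_refl := (theory_refl (eqV_theory T)).
Local Notation V_sym := (theory_sym (eqV_theory T)).
Local Notation V_trans := (theory_trans (eqV_theory T)).
Local Notation V_subst := (theory_subst (eqV_theory T)).
Local Notation V_subst_pointwise := (theory_subst_pointwise (eqV_theory T)).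

Lemma cls_eq s t : cls s = cls t <-> V s t.
Proof. exact: qclass_theory_eq (eqV_theory T) s t. Qed.

Lemma cls_rep w : cls (rep w) = w.
Proof. exact: qrepK. Qed.

Lemma rep_cls t : V (rep (cls t)) t.
Proof. by apply/cls_eq; rewrite cls_rep. Qed.

Lemma cls_subst_rep sb t : cls (subst sb (rep (cls t))) = cls (subst sb t).
Proof. by apply/cls_eq/V_subst/rep_cls. Qed.

Lemma cls_subst_pointwise (s1 s2 : nat -> term) t :
  (forall i, V (s1 i) (s2 i)) -> cls (subst s1 t) = cls (subst s2 t).
Proof. by move=> V_s12; apply/cls_eq/V_subst_pointwise. Qed.

Lemma Cl_op_cls o (ts : 'I_(ar o) -> term) :
  Cl_op T o (fun i => cls (ts i)) = cls (App o ts).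
Proof. by apply/cls_eq; apply: (theory_App (eqV_theory T)) => i; apply: rep_cls. Qed.

Lemma Cl_q_cls n s (ts : 'I_n -> term) :
  Cl_q T n (cls s) (fun i => cls (ts i)) = cls (subst (pad ts Var) s).
Proof.
rewrite /Cl_q cls_subst_rep; apply: cls_subst_pointwise => j.
by rewrite /pad; case: insubP => [i _ _|_]; [apply: rep_cls | apply: V_refl].
Qed.

Lemma cls_subst_vars_lt [m] sb [s] : vars_lt m s ->
  cls (subst sb s) = Cl_q T m (cls s) (fun i : 'I_m => cls (sb i)).
Proof.
move=> s_m; rewrite Cl_q_cls; congr cls.
by apply: eq_subst_vars_lt s_m _ => j lt_jm; rewrite pad_lt.
Qed.

Lemma Cl_clone_algebra : is_clone_algebra (Cl_op T) (Cl_q T) (Cl_e T).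
Proof.
split; [|split; [|split; [|split; [|split]]]].
- by move=> n x i; rewrite /Cl_q cls_subst_rep /= pad_ord cls_rep.
- by move=> n x j le_nj; rewrite /Cl_q cls_subst_rep /= pad_ge.
- move=> n x; rewrite /Cl_q -[RHS]cls_rep -[in RHS](subst_Var (rep x)).
  apply: cls_subst_pointwise => j; rewrite /pad.
  by case: insubP => [i _ <-|_]; [apply: rep_cls | apply: V_refl].
- move=> k n x y lt_kn; apply: cls_subst_pointwise => j.
  have [lt_jn|le_nj] := ltnP j n; last first.
    have le_kj : k <= j := leq_trans (ltnW lt_kn) le_nj.
    by rewrite !pad_ge //; apply: V_refl.
  rewrite (pad_lt _ _ lt_jn) /=; have [lt_jk|le_kj] := ltnP j k.
    by rewrite !(pad_lt _ _ lt_jk); apply: V_refl.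
  by rewrite !pad_ge //; apply: V_sym; apply: rep_cls.
- move=> n x y z; rewrite /Cl_q cls_subst_rep subst_comp.
  apply: cls_subst_pointwise => j; rewrite /pad; case: insubP => [i _ _|lt_jn] /=.
    by apply: V_sym; apply: rep_cls.
  by rewrite insubF; [apply: V_refl | apply: negbTE].
- move=> n o xs y; rewrite /Cl_q cls_subst_rep /= -Cl_op_cls.
  by congr (Cl_op T o); apply: functional_extensionality => i; rewrite cls_subst_rep.
Qed.

Local Notation independent := (independent (Cl_q T) (Cl_e T)).
Local Notation has_dim := (has_dim (Cl_q T) (Cl_e T)).

Definition subst_var k (s : term) : nat -> term :=
  fun j => if j == k then s else Var j.

Lemma independent_cls t k :
  independent (cls t) k <-> V (subst (subst_var k (Var k.+1)) t) t.
Proof.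
rewrite /Defs.independent.
have -> : (fun i : 'I_k.+1 => if (i : nat) < k then Cl_e T i else Cl_e T k.+1)
    = fun i => cls (if (i : nat) < k then Var i else Var k.+1).
  by apply: functional_extensionality => i; case: ifP.
rewrite Cl_q_cls.
have -> : pad (fun i : 'I_k.+1 => if (i : nat) < k then Var i else Var k.+1) Var
    = subst_var k (Var k.+1).
  apply: functional_extensionality => j; rewrite /subst_var.
  have [lt_jk|le_kj] := ltnP j k.+1; last by rewrite pad_ge // gtn_eqF.
  rewrite pad_lt /= ltn_neqAle -ltnS lt_jk andbT.
  by case: eqVneq => [->|].
exact: cls_eq.
Qed.

Lemma independent_subst_var t k s :
  independent (cls t) k -> V (subst (subst_var k s) t) t.
Proof.
move/independent_cls=> V_shift.
have subst_shift : subst (subst_var k s) (subst (subst_var k (Var k.+1)) t)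
    = subst (subst_var k (Var k.+1)) t.
  rewrite subst_comp; congr subst; apply: functional_extensionality => j.
  rewrite /subst_var; case: (eqVneq j k) => [_|/negbTE ne_jk] /=.
    by rewrite gtn_eqF.
  by rewrite ne_jk.
have := V_subst (subst_var k s) V_shift; rewrite subst_shift => V_s.
exact: V_trans (V_sym V_s) V_shift.
Qed.

Lemma independent_ge_var_bound t k : var_bound t <= k -> independent (cls t) k.
Proof.
move=> le_bk; apply/independent_cls; rewrite -{2}(subst_Var t).
rewrite (eq_subst_vars_lt _ Var (vars_lt_bound t)); first exact: V_refl.
by move=> i lt_ib; rewrite /subst_var ltn_eqF // (leq_trans lt_ib le_bk).
Qed.

Definition collapse d m : nat -> term :=
  fun i => if (d <= i) && (i < m) then Var 0 else Var i.

Lemma cls_subst_collapse [t d] : (forall k, d <= k -> independent (cls t) k) ->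
  forall m, cls (subst (collapse d m) t) = cls t.
Proof.
move=> indep_t; elim=> [|m IHm].
  rewrite -[RHS](congr1 cls (subst_Var t)); congr (cls (subst _ t)).
  by apply: functional_extensionality => i; rewrite /collapse ltn0 andbF.
have [lt_md|le_dm] := ltnP m d.
  rewrite -IHm; congr (cls (subst _ t)); apply: functional_extensionality => i.
  rewrite /collapse ltnS [i <= m]leq_eqVlt.
  by case: (eqVneq i m) => [->|] //=; rewrite leqNgt lt_md.
have collapseS :
    collapse d m.+1 = fun i => subst (subst_var m (Var 0)) (collapse d m i).
  apply: functional_extensionality => i.
  rewrite /collapse /subst_var ltnS [i <= m]leq_eqVlt.
  case: (eqVneq i m) => [->|ne_im] /=; first by rewrite le_dm ltnn /= eqxx.
  by case: ifP => _ /=; [case: (0 == m) | rewrite (negbTE ne_im)].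
rewrite collapseS -subst_comp -[in RHS]IHm; apply/cls_eq/independent_subst_var.
by rewrite IHm; apply: indep_t.
Qed.

Lemma exists_vars_lt_rep [w d] : 0 < d -> (forall k, d <= k -> independent w k) ->
  exists t, vars_lt d t /\ cls t = w.
Proof.
move=> d_gt0 indep_w; rewrite -(cls_rep w) in indep_w *.
exists (subst (fun i => if d <= i then Var 0 else Var i) (rep w)); split.
  by apply: vars_lt_subst => i /=; case: leqP.
rewrite -(cls_subst_collapse indep_w (var_bound (rep w))); congr cls.
apply: eq_subst_vars_lt (vars_lt_bound _) _ => i lt_ib.
by rewrite /collapse lt_ib andbT.
Qed.

Lemma Cl_finite_dimensional : finite_dimensional (Cl_q T) (Cl_e T).
Proof.
move=> w; apply: (@has_dim_of_independent_ge _ _ _ _ (var_bound (rep w))) => k le_bk.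
by rewrite -(cls_rep w); apply: independent_ge_var_bound.
Qed.

Lemma has_dim_pos_rep w n : 0 < n -> has_dim w n ->
  exists t, vars_lt n t /\ cls t = w.
Proof.
move=> n_gt0 [[n0 _]|[_ [_ indep_w]]]; first by rewrite n0 in n_gt0.
exact: exists_vars_lt_rep n_gt0 indep_w.
Qed.

Lemma has_dim0_rep w : has_dim w 0 ->
  exists t, [/\ vars_lt 1 t, cls t = w & V t (subst (subst_var 0 (Var 1)) t)].
Proof.
case=> [[_ indep_w]|[]] //.
have [t [t_1 cls_t]] := exists_vars_lt_rep (ltn0Sn 0) (fun k _ => indep_w k).
by exists t; split=> //; apply: V_sym; apply/independent_cls; rewrite cls_t.
Qed.

Local Notation congruence := (is_congruence (Cl_op T) (Cl_q T)).

Definition theory_of (R : Fr T -> Fr T -> Prop) : term -> term -> Prop :=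
  fun s t => R (cls s) (cls t).

Definition congruence_of (E : term -> term -> Prop) : Fr T -> Fr T -> Prop :=
  fun a b => E (rep a) (rep b).

Lemma theory_of_congruence R : congruence R ->
  is_eq_theory (theory_of R) /\ incl_rel T (theory_of R).
Proof.
case=> R_refl R_sym R_trans R_op R_q; split; last first.
  by move=> s t /T_sub_eqV /cls_eq eq_st; rewrite /theory_of eq_st.
split.
- by move=> t; apply: R_refl.
- by move=> s t; apply: R_sym.
- by move=> s t u; apply: R_trans.
- by move=> o ss ts R_sts; rewrite /theory_of -!Cl_op_cls; apply: R_op.
- move=> sb s t R_st; pose m := maxn (var_bound s) (var_bound t).
  have s_m : vars_lt m s := vars_lt_leq (leq_maxl _ _) (vars_lt_bound s).
  have t_m : vars_lt m t := vars_lt_leq (leq_maxr _ _) (vars_lt_bound t).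
  rewrite /theory_of (cls_subst_vars_lt sb s_m) (cls_subst_vars_lt sb t_m).
  by apply: R_q.
Qed.

Section TheoryAboveT.
Variable E : term -> term -> Prop.
Hypotheses (E_theory : is_eq_theory E) (T_E : incl_rel T E).

Lemma congruence_of_cls s t : congruence_of E (cls s) (cls t) <-> E s t.
Proof.
have E_rep_cls u : E (rep (cls u)) u.
  by apply: (eqV_sub_theory E_theory T_E); apply: rep_cls.
have E_cls_rep u : E u (rep (cls u)) := theory_sym E_theory (E_rep_cls u).
rewrite /congruence_of; split=> E_st.
  apply: (theory_trans E_theory (E_cls_rep s)).
  exact: (theory_trans E_theory E_st (E_rep_cls t)).
apply: (theory_trans E_theory (E_rep_cls s)).
exact: (theory_trans E_theory E_st (E_cls_rep t)).
Qed.

Lemma congruence_of_theory : congruence (congruence_of E).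
Proof.
split.
- by move=> x; apply: theory_refl.
- by move=> x y; apply: theory_sym.
- by move=> x y z; apply: theory_trans.
- move=> o xs ys E_xys; apply/(congruence_of_cls (App o _) (App o _)).
  exact: theory_App.
- move=> n x y bs cs E_xy E_bcs; apply/(congruence_of_cls (subst _ _) (subst _ _)).
  apply: (theory_trans E_theory (theory_subst E_theory _ E_xy)).
  apply: (theory_subst_pointwise E_theory) => j; rewrite /pad.
  by case: insubP => [i _ _|_]; [apply: E_bcs | apply: theory_refl].
Qed.

Lemma congruence_ofK : theory_of (congruence_of E) = E.
Proof.
do 2![apply: functional_extensionality => ?].
by apply: propositional_extensionality; apply: congruence_of_cls.
Qed.

End TheoryAboveT.

Lemma theory_ofK R : congruence_of (theory_of R) = R.
Proof.
do 2![apply: functional_extensionality => ?].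
by rewrite /congruence_of /theory_of !cls_rep.
Qed.

Lemma incl_theory_of R R' : incl_rel R R' <-> incl_rel (theory_of R) (theory_of R').
Proof.
split=> [R_R' s t | R_R' x y]; first exact: R_R'.
by rewrite -(cls_rep x) -(cls_rep y); apply: R_R'.
Qed.

Definition term_op (w : Fr T) : (nat -> Fr T) -> Fr T :=
  fun s => eval (Cl_op T) s (rep w).

Lemma eval_Cl_op v t : eval (Cl_op T) v t = cls (subst (fun j => rep (v j)) t).
Proof. exact: eval_quot_op (eqV_theory T) v t. Qed.

Lemma term_op_cls t : term_op (cls t) = fun s => eval (Cl_op T) s t.
Proof.
apply: functional_extensionality => s; rewrite /term_op !eval_Cl_op.
exact/cls_eq/V_subst/rep_cls.
Qed.

Lemma term_op_Var w : term_op w (fun j => cls (Var j)) = w.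
Proof.
rewrite /term_op eval_Cl_op -[RHS]cls_rep -[in RHS](subst_Var (rep w)).
by apply: cls_subst_pointwise => j; apply: rep_cls.
Qed.

Lemma term_op_inj : injective term_op.
Proof. by move=> w w' eq_ww'; rewrite -(term_op_Var w) -(term_op_Var w') eq_ww'. Qed.

Lemma in_block_term_op phi : in_block (Cl_op T) phi <-> exists w, term_op w = phi.
Proof.
split=> [[n [f [[k [t [_ _ f_t]]] ->]]] | [w <-]].
  exists (cls t); rewrite term_op_cls; apply: functional_extensionality => s.
  by have := f_t (fun i : 'I_k => s i) s; rewrite pad_restrict.
pose b := var_bound (rep w).
exists b, (fun x : 'I_b -> Fr T =>
  eval (Cl_op T) (pad x (fun j => cls (Var j))) (rep w)).
split; last first.
  apply: functional_extensionality => s; rewrite /top /term_op.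
  by apply: eq_eval_vars_lt (vars_lt_bound _) _ => j lt_jb; rewrite (pad_lt _ _ lt_jb).
exists b, (rep w); split=> // [|x d]; first exact: vars_lt_bound.
by apply: eq_eval_vars_lt (vars_lt_bound _) _ => j lt_jb; rewrite !(pad_lt _ _ lt_jb).
Qed.

Lemma term_op_Cl_op o (ws : 'I_(ar o) -> Fr T) :
  term_op (Cl_op T o ws) = ff_op (Cl_op T) o (fun i => term_op (ws i)).
Proof. exact: (term_op_cls (App o (fun i => rep (ws i)))). Qed.

Lemma term_op_Cl_q n a (bs : 'I_n -> Fr T) :
  term_op (Cl_q T n a bs) = ff_q n (term_op a) (fun i => term_op (bs i)).
Proof.
rewrite [Cl_q T n a bs]/Cl_q term_op_cls; apply: functional_extensionality => s.
rewrite eval_subst /ff_q /term_op; congr eval; apply: functional_extensionality => j.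
by rewrite /pad; case: insubP.
Qed.

Lemma term_op_Cl_e i : term_op (Cl_e T i) = ff_e i.
Proof. exact: (term_op_cls (Var i)). Qed.

End CloneAlgebraOfVariety.

Theorem proposition10p3 (Op : Type) (ar : Op -> nat)
    (T : term Op ar -> term Op ar -> Prop) :
  is_eq_theory T ->
  (* (1) Cl(V) is a finite dimensional clone tau-algebra *)
  (is_clone_algebra (Cl_op T) (Cl_q T) (Cl_e T) /\
   finite_dimensional (Cl_q T) (Cl_e T)) /\
  (* (2) Con Cl(V) is isomorphic to L(T) *)
  (exists (f : (Fr T -> Fr T -> Prop) -> (term Op ar -> term Op ar -> Prop))
          (g : (term Op ar -> term Op ar -> Prop) -> (Fr T -> Fr T -> Prop)),
     [/\ (forall R, is_congruence (Cl_op T) (Cl_q T) R ->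
            is_eq_theory (f R) /\ incl_rel T (f R)),
         (forall E, is_eq_theory E -> incl_rel T E ->
            is_congruence (Cl_op T) (Cl_q T) (g E)),
         (forall R, is_congruence (Cl_op T) (Cl_q T) R -> g (f R) = R),
         (forall E, is_eq_theory E -> incl_rel T E -> f (g E) = E) &
         (forall R R', is_congruence (Cl_op T) (Cl_q T) R ->
            is_congruence (Cl_op T) (Cl_q T) R' ->
            (incl_rel R R' <-> incl_rel (f R) (f R')))]) /\
  (* (3) *)
  (forall (w : Fr T) (n : nat), 0 < n -> has_dim (Cl_q T) (Cl_e T) w n ->
     exists t : term Op ar, vars_lt n t /\ cls T t = w) /\
  (* (4) *)
  (forall w : Fr T, has_dim (Cl_q T) (Cl_e T) w 0 ->
     exists t : term Op ar, [/\ vars_lt 1 t, cls T t = w &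
       eqV T t (subst (fun j => if j == 0 then Var 1 else Var j) t)]) /\
  (* (5) Cl(V) is isomorphic to (Clo F_V)^T *)
  (exists h : Fr T -> ((nat -> Fr T) -> Fr T),
     [/\ injective h,
         (forall phi, in_block (Cl_op T) phi <-> exists w, h w = phi),
         (forall o (ws : 'I_(ar o) -> Fr T),
            h (Cl_op T o ws) = ff_op (Cl_op T) o (fun i => h (ws i))),
         (forall n (a : Fr T) (bs : 'I_n -> Fr T),
            h (Cl_q T n a bs) = ff_q n (h a) (fun i => h (bs i))) &
         (forall i, h (Cl_e T i) = ff_e i)]).
Proof.
move=> _; split.
  by split; [exact: Cl_clone_algebra | exact: Cl_finite_dimensional].
split.
  exists (@theory_of _ _ T), (@congruence_of _ _ T); split.
  - exact: theory_of_congruence.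
  - exact: congruence_of_theory.
  - by move=> R _; apply: theory_ofK.
  - exact: congruence_ofK.
  - by move=> R R' _ _; apply: incl_theory_of.
split; first exact: has_dim_pos_rep.
split; first exact: has_dim0_rep.
exists (@term_op _ _ T); split.
- exact: term_op_inj.
- exact: in_block_term_op.
- exact: term_op_Cl_op.
- exact: term_op_Cl_q.
- exact: term_op_Cl_e.
Qed.
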